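(* Let $\mathcal{S}$ be a free abelian group of infinite rank, in the signature $(+,-,0)$, and let $I$ be the set of subgroups $A\le\mathcal{S}$ of finite rank which are direct summands of $\mathcal{S}$ (there is $C\le\mathcal{S}$ with $\mathcal{S}=A\oplus C$), ordered by inclusion. Then $\lim_I\mathrm{Th}(A^* )=\mathrm{Th}(\mathcal{S}^* )$, where $A$ ranges over $I$.
   Context: For a structure $\mathcal{T}$ with universe $T$, $\mathrm{Th}(\mathcal{T}^* )$ is the set of sentences in $(+,-,0)$ expanded by a constant for each element of $T$ that are true in $\mathcal{T}$; these are regarded as subsets of the set of sentences with constants from the universe of $\mathcal{S}$. For a family $\{\Delta_i\}_{i\in I}$ indexed by a directed set: $\limsup_I \Delta_i=\{\theta: \forall i\ \exists j\ge i\ [\theta\in\Delta_j]\}$, $\liminf_I \Delta_i=\{\theta: \exists i\ \forall j\ge i\ [\theta\in\Delta_j]\}$, and $\lim_I\Delta_i=\Delta$ means both equal $\Delta$. *)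

From HB Require Import structures.
From mathcomp Require Import all_boot all_order all_algebra.
Set Implicit Arguments. Unset Strict Implicit. Unset Printing Implicit Defensive.
Import Order.TTheory GRing.Theory Num.Theory.
Local Open Scope ring_scope.

Section Defs.
Variable S : zmodType.

Definition Zindependent (n : nat) (v : 'I_n -> S) : Prop :=
  forall c : 'I_n -> int, \sum_(i < n) v i *~ c i = 0 -> forall i, c i = 0.

Definition free_abelian_infinite_rank : Prop :=
  exists B : S -> Prop,
    (forall n (v : 'I_n -> S), injective v -> (forall i, B (v i)) -> Zindependent v)
    /\ (forall x : S, exists n (v : 'I_n -> S) (c : 'I_n -> int),
          (forall i, B (v i)) /\ x = \sum_(i < n) v i *~ c i)
    /\ (forall n (v : 'I_n -> S), exists b, B b /\ forall i, v i <> b).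

Definition subgroup (A : S -> Prop) : Prop :=
  A 0 /\ (forall x y, A x -> A y -> A (x + y)) /\ (forall x, A x -> A (- x)).

Definition finite_rank (A : S -> Prop) : Prop :=
  exists N : nat, forall n (v : 'I_n -> S),
    (forall i, A (v i)) -> Zindependent v -> (n <= N)%N.

Definition direct_summand (A : S -> Prop) : Prop :=
  exists C : S -> Prop, subgroup C /\
    (forall x, A x -> C x -> x = 0) /\
    (forall x, exists a c, A a /\ C c /\ x = a + c).

Definition in_I (A : S -> Prop) : Prop :=
  subgroup A /\ finite_rank A /\ direct_summand A.

Definition subset (A B : S -> Prop) : Prop := forall x, A x -> B x.

Inductive term : Type :=
  | tVar : nat -> term
  | tConst : S -> term
  | tZero : term
  | tAdd : term -> term -> term
  | tNeg : term -> term.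

Inductive formula : Type :=
  | fEq : term -> term -> formula
  | fFalse : formula
  | fNot : formula -> formula
  | fAnd : formula -> formula -> formula
  | fOr : formula -> formula -> formula
  | fImp : formula -> formula -> formula
  | fAll : nat -> formula -> formula
  | fEx : nat -> formula -> formula.

Fixpoint term_eval (e : nat -> S) (t : term) : S :=
  match t with
  | tVar n => e n
  | tConst a => a
  | tZero => 0
  | tAdd t1 t2 => term_eval e t1 + term_eval e t2
  | tNeg t1 => - term_eval e t1
  end.

Definition upd (e : nat -> S) (n : nat) (x : S) : nat -> S :=
  fun m => if m == n then x else e m.

Fixpoint holds (A : S -> Prop) (e : nat -> S) (f : formula) : Prop :=
  match f with
  | fEq t1 t2 => term_eval e t1 = term_eval e t2
  | fFalse => False
  | fNot g => ~ holds A e g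
  | fAnd g h => holds A e g /\ holds A e h
  | fOr g h => holds A e g \/ holds A e h
  | fImp g h => holds A e g -> holds A e h
  | fAll n g => forall x, A x -> holds A (upd e n x) g
  | fEx n g => exists x, A x /\ holds A (upd e n x) g
  end.

Fixpoint term_fv (t : term) : seq nat :=
  match t with
  | tVar n => [:: n]
  | tConst _ | tZero => [::]
  | tAdd t1 t2 => term_fv t1 ++ term_fv t2
  | tNeg t1 => term_fv t1
  end.

Fixpoint fv (f : formula) : seq nat :=
  match f with
  | fEq t1 t2 => term_fv t1 ++ term_fv t2
  | fFalse => [::]
  | fNot g => fv g
  | fAnd g h | fOr g h | fImp g h => fv g ++ fv h
  | fAll n g | fEx n g => filter (fun m => m != n) (fv g)
  end.

Definition sentence (f : formula) : Prop := fv f = [::].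

Fixpoint term_consts_in (A : S -> Prop) (t : term) : Prop :=
  match t with
  | tVar _ | tZero => True
  | tConst a => A a
  | tAdd t1 t2 => term_consts_in A t1 /\ term_consts_in A t2
  | tNeg t1 => term_consts_in A t1
  end.

Fixpoint consts_in (A : S -> Prop) (f : formula) : Prop :=
  match f with
  | fEq t1 t2 => term_consts_in A t1 /\ term_consts_in A t2
  | fFalse => True
  | fNot g | fAll _ g | fEx _ g => consts_in A g
  | fAnd g h | fOr g h | fImp g h => consts_in A g /\ consts_in A h
  end.

(** Th(A^* ): sentences with constants from A true in the substructure A. *)
Definition Th (A : S -> Prop) (f : formula) : Prop :=
  sentence f /\ consts_in A f /\ holds A (fun _ => 0) f.

Definition ThS (f : formula) : Prop := Th (fun _ => True) f.

Definition limsup_I (f : formula) : Prop :=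
  forall A, in_I A -> exists B, in_I B /\ subset A B /\ Th B f.

Definition liminf_I (f : formula) : Prop :=
  exists A, in_I A /\ forall B, in_I B -> subset A B -> Th B f.

End Defs.

(* Fix a basis of S.  Take a sentence of quantifier depth k whose constants lie
   in the span of finitely many basis vectors E0.  It holds in a finite-rank
   direct summand A containing E0 and k further basis vectors iff it holds in S,
   by an Ehrenfeucht-Fraisse argument.  A position records a finite family L in A
   with dual coordinate forms, spanning the current assignment, together with k
   spare elements of A independent modulo span L.  A move inside A adjoins the
   primitive part of the chosen element, which lies in A because A is pure.  A
   move in S is first pulled into A by an automorphism of S fixing span L, a
   product of transvections sending the new primitive direction onto one coming
   from a spare element.  A Steinitz exchange then keeps k - 1 spare elements.
   So each sentence belongs to Th(A^* ) iff it belongs to Th(S^* ) for all large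
   enough A, and I is directed, hence both limits are Th(S^* ). *)

From Pilot Require Import Defs.
From mathcomp Require Import all_boot all_order all_algebra.
From Stdlib Require Import Classical FunctionalExtensionality ClassicalEpsilon.
Set Implicit Arguments. Unset Strict Implicit. Unset Printing Implicit Defensive.
Import Order.TTheory GRing.Theory Num.Theory.
Local Open Scope ring_scope.

Lemma eq_big_seq_supp (T : eqType) (R : zmodType) (U V : seq T) (F : T -> R) :
  uniq U -> uniq V ->
  (forall b, b \in U -> b \notin V -> F b = 0) ->
  (forall b, b \in V -> b \notin U -> F b = 0) ->
  \sum_(b <- U) F b = \sum_(b <- V) F b.
Proof.
move=> uU uV hU hV.
have e1 : \sum_(b <- U) F b = \sum_(b <- U | b \in V) F b.
  rewrite [RHS]big_mkcond /=; apply: eq_big_seq => b bU.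
  by case: ifP => // /negbT bV; rewrite hU.
have e2 : \sum_(b <- V) F b = \sum_(b <- V | b \in U) F b.
  rewrite [RHS]big_mkcond /=; apply: eq_big_seq => b bV.
  by case: ifP => // /negbT bU; rewrite hV.
rewrite e1 e2 -big_filter -[RHS]big_filter.
apply: perm_big; apply: uniq_perm; rewrite ?filter_uniq //.
by move=> b; rewrite !mem_filter andbC.
Qed.

Lemma big_seq_only (T : eqType) (R : zmodType) (U : seq T) (u : T) (F : T -> R) :
  uniq U -> u \in U -> (forall b, b \in U -> b != u -> F b = 0) ->
  \sum_(b <- U) F b = F u.
Proof.
move=> uU uin h; rewrite (big_rem u) //= big1_seq ?addr0 // => b /andP[_ bin].
by move: bin; rewrite mem_rem_uniq // => /andP[] bu bU; apply: h.
Qed.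

(* Over [rat] the kernel of the [n x N] matrix is nontrivial; clearing the
   denominators of a kernel vector gives an integer relation. *)
Lemma int_rows_dependent n N (M : 'I_n -> 'I_N -> int) : (N < n)%N ->
  exists c : 'I_n -> int, (exists i, c i != 0) /\
    forall j, \sum_(i < n) c i * M i j = 0.
Proof.
move=> lt.
pose A : 'M[rat]_(n, N) := \matrix_(i, j) (M i j)%:~R.
have nK : kermx A != 0.
  rewrite -mxrank_eq0 mxrank_ker subn_eq0 -ltnNge.
  exact: leq_ltn_trans (rank_leq_col A) lt.
have [i0 [j0 hij]] : exists i0 j0, kermx A i0 j0 != 0.
  apply: NNPP => H; move/negP: nK; apply; apply/eqP/matrixP => i j.
  rewrite [RHS]mxE; apply/eqP/negPn/negP => nz; apply: H; by exists i, j.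
pose y i : rat := kermx A i0 i.
have hy j : \sum_i y i * A i j = 0.
  by have := congr1 (fun B : 'M[rat]_(n, N) => B i0 j) (mulmx_ker A); rewrite !mxE.
pose D := \prod_(i < n) denq (y i).
pose c i := numq (y i) * \prod_(i' < n | i' != i) denq (y i').
have hc i : ((c i)%:~R : rat) = y i * D%:~R.
  by rewrite /c /D [in RHS](bigD1 i) //= !intrM numqE !mulrA.
exists c; split.
  exists j0; rewrite -(intr_eq0 rat) hc mulf_neq0 //.
  by rewrite intr_eq0 gt_eqF // prodr_gt0 // => i _; apply: denq_gt0.
move=> j; apply: (@intr_inj rat); rewrite rmorph_sum /=.
transitivity (D%:~R * \sum_i y i * A i j); last by rewrite hy mulr0.
rewrite mulr_sumr; apply: eq_bigr => i _.
by rewrite intrM hc mxE mulrCA mulrA.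
Qed.

(** * Spans and biorthogonal families *)

Section ZMorphism.
Variables S T : zmodType.
Implicit Types (x y : S) (f : S -> T).

Definition zmorph f := {morph f : x y / x + y}.

Lemma zmorph0 f : zmorph f -> f 0 = 0.
Proof. by move=> h; apply: (addrI (f 0)); rewrite -h !addr0. Qed.

Lemma zmorphN f x : zmorph f -> f (- x) = - f x.
Proof. by move=> h; apply: (addrI (f x)); rewrite -h !subrr zmorph0. Qed.

Lemma zmorphB f x y : zmorph f -> f (x - y) = f x - f y.
Proof. by move=> h; rewrite h zmorphN. Qed.

Lemma zmorphMz f x c : zmorph f -> f (x *~ c) = f x *~ c.
Proof.
move=> h; have hn (n : nat) : f (x *~ n) = f x *~ n.
  elim: n => [|n IH]; first by rewrite !mulr0z zmorph0.
  rewrite -[x *~ n.+1]/(x *+ n.+1) -[f x *~ n.+1]/(f x *+ n.+1) !mulrS h.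
  by rewrite -[x *+ n]/(x *~ n) IH.
case: c => n; first exact: hn.
by rewrite !NegzE !mulrNz zmorphN // hn.
Qed.

Lemma zmorph_sum f (I : Type) (r : seq I) (P : pred I) (F : I -> S) :
  zmorph f -> f (\sum_(i <- r | P i) F i) = \sum_(i <- r | P i) f (F i).
Proof. by move=> h; rewrite (big_morph f h (zmorph0 h)). Qed.

End ZMorphism.

Section ZSpan.
Variable S : zmodType.
Implicit Types (x y : S) (L : seq S) (f : S -> int).

Definition zspan L x := exists c : S -> int, x = \sum_(u <- L) u *~ c u.

Lemma zspan0 L : zspan L 0.
Proof. by exists (fun _ => 0); rewrite big1 // => u _; rewrite mulr0z. Qed.

Lemma zspanD L x y : zspan L x -> zspan L y -> zspan L (x + y).
Proof.
move=> [c ->] [d ->]; exists (fun u => c u + d u).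
by rewrite -big_split; apply: eq_bigr => u _; rewrite mulrzDr.
Qed.

Lemma zspanMz L x n : zspan L x -> zspan L (x *~ n).
Proof.
move=> [c ->]; exists (fun u => c u * n); rewrite mulrz_suml.
by apply: eq_bigr => u _; rewrite mulrzA.
Qed.

Lemma zspanN L x : zspan L x -> zspan L (- x).
Proof. by move=> h; rewrite -mulrN1z; apply: zspanMz. Qed.

Lemma zspanB L x y : zspan L x -> zspan L y -> zspan L (x - y).
Proof. by move=> hx hy; apply: zspanD => //; apply: zspanN. Qed.

Lemma zspan_sum L (T : Type) (r : seq T) (F : T -> S) :
  (forall t, zspan L (F t)) -> zspan L (\sum_(t <- r) F t).
Proof.
move=> h; elim: r => [|t r IH]; first by rewrite big_nil; apply: zspan0.
by rewrite big_cons; apply: zspanD.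
Qed.

Lemma zspan_mem L u : uniq L -> u \in L -> zspan L u.
Proof.
move=> uL uin; exists (fun v => (v == u)%:R).
rewrite (big_seq_only uL uin) ?eqxx ?mulr1z // => b _ /negbTE ->.
by rewrite mulr0z.
Qed.

Lemma zspan_subset L1 L2 x : uniq L1 -> uniq L2 -> {subset L1 <= L2} ->
  zspan L1 x -> zspan L2 x.
Proof.
move=> u1 u2 sub [c ->]; exists (fun v => if v \in L1 then c v else 0).
rewrite [RHS](@eq_big_seq_supp _ _ L2 L1) //.
- by apply: eq_big_seq => b ->.
- by move=> b _ /negbTE ->; rewrite mulr0z.
- by move=> b /sub ->.
Qed.

Lemma zspan_catl L e y : uniq (L ++ [:: e]) -> zspan L y -> zspan (L ++ [:: e]) y.
Proof.
move=> u; apply: zspan_subset => //; first by move: u; rewrite cat_uniq => /andP[].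
by move=> v vin; rewrite mem_cat vin.
Qed.

Lemma zspan_catE L e y : uniq (L ++ [:: e]) ->
  zspan (L ++ [:: e]) y <-> exists y' b, zspan L y' /\ y = y' + e *~ b.
Proof.
move=> u; split.
  move=> [c ->]; exists (\sum_(u <- L) u *~ c u), (c e).
  by rewrite big_cat big_seq1; split => //; exists c.
move=> [y' [b [[c ->] ->]]].
have nL : e \notin L by move: u; rewrite cat_uniq /= orbF => /and3P[].
exists (fun v => if v == e then b else c v); rewrite big_cat big_seq1 eqxx.
congr (_ + _); apply: eq_big_seq => v vin.
by case: eqP => // ve; move: nL; rewrite -ve vin.
Qed.

Lemma zmorph_zspan0 f L x : zmorph f -> (forall u, u \in L -> f u = 0) ->
  zspan L x -> f x = 0.
Proof.
move=> hf h [c ->]; rewrite zmorph_sum // big1_seq // => u /andP[_ uin].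
by rewrite zmorphMz // h // mul0rz.
Qed.

Definition biorthogonal L (f : S -> S -> int) :=
  [/\ uniq L, forall u, zmorph (f u) &
      forall u v, u \in L -> v \in L -> f u v = (u == v)%:R].

Definition proj L (f : S -> S -> int) x := \sum_(u <- L) u *~ f u x.

Section Biorthogonal.
Variables (L : seq S) (f : S -> S -> int).
Hypothesis bL : biorthogonal L f.

Lemma biorth_coef c u : u \in L -> f u (\sum_(v <- L) v *~ c v) = c u.
Proof.
case: bL => uL lf fd uin; rewrite zmorph_sum //.
rewrite (big_seq_only uL uin); first by rewrite zmorphMz // fd // eqxx mulrzz mul1r.
by move=> b bin bu; rewrite zmorphMz // fd // eq_sym (negbTE bu) mulrzz mul0r.
Qed.

Lemma biorth_zspanE x : zspan L x -> x = proj L f x.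
Proof. by move=> [c ->]; apply: eq_big_seq => u uin; rewrite biorth_coef. Qed.

Lemma zspan_proj x : zspan L (proj L f x).
Proof. by exists (fun u => f u x). Qed.

Lemma biorth_proj_compl x u : u \in L -> f u (x - proj L f x) = 0.
Proof. by case: bL => _ lf _ uin; rewrite zmorphB // biorth_coef // subrr. Qed.

Lemma biorth_rank_bound n (v : 'I_n -> S) : Zindependent v ->
  (forall i, zspan L (v i)) -> (n <= size L)%N.
Proof.
move=> ind sp; rewrite leqNgt; apply/negP => lt.
have [c [[i ci] hc]] :=
  int_rows_dependent (fun i (j : 'I_(size L)) => f (nth 0 L j) (v i)) lt.
suff /ind /(_ i) ci0 : \sum_(i < n) v i *~ c i = 0 by rewrite ci0 eqxx in ci.
transitivity (\sum_(i < n) \sum_(u <- L) u *~ (f u (v i) * c i)).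
  apply: eq_bigr => i' _; rewrite {1}(biorth_zspanE (sp i')) /proj mulrz_suml.
  by apply: eq_bigr => u _; rewrite mulrzA.
rewrite exchange_big /= big1_seq // => u /andP[_ uin].
have iu : (index u L < size L)%N by rewrite index_mem.
have := hc (Ordinal iu); rewrite /= nth_index // => h.
rewrite -mulrz_sumr (eq_bigr (fun i' => c i' * f u (v i'))) ?h ?mulr0z //.
by move=> i' _; rewrite mulrC.
Qed.

End Biorthogonal.

End ZSpan.

Section BiorthExtension.
Variables (S : zmodType) (L : seq S) (f : S -> S -> int).
Hypothesis bL : biorthogonal L f.

Definition form_perp (g : S -> int) x := g x - \sum_(u <- L) g u * f u x.

Lemma form_perp_zmorph g : zmorph g -> zmorph (form_perp g).
Proof.
case: bL => _ lf _ lg x y; rewrite /form_perp lg.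
rewrite (eq_bigr (fun u => g u * f u x + g u * f u y)); last by move=> u _; rewrite lf mulrDr.
by rewrite big_split /= opprD addrACA.
Qed.

Lemma form_perp_mem g v : v \in L -> form_perp g v = 0.
Proof.
case: bL => uL _ fd vin; rewrite /form_perp (big_seq_only uL vin).
  by rewrite fd // eqxx mulr1 subrr.
by move=> b bin bv; rewrite fd // (negbTE bv) mulr0.
Qed.

Lemma form_perp_ker g x : (forall u, u \in L -> f u x = 0) -> form_perp g x = g x.
Proof.
by move=> h; rewrite /form_perp big1_seq ?subr0 // => u /andP[_ uin]; rewrite h // mulr0.
Qed.

Lemma biorth_extend e (g : S -> int) : (forall u, u \in L -> f u e = 0) -> zmorph g -> g e = 1 ->
  exists f', biorthogonal (L ++ [:: e]) f'.
Proof.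
move=> fe lg ge; have [uL lf fd] := bL.
have eL : e \notin L by apply/negP => ein; move: (fe e ein); rewrite fd // eqxx.
have neq u : u \in L -> (u == e) = false by move=> uin; apply: contraNF eL => /eqP <-.
exists (fun u => if u == e then form_perp g else f u); split.
- by rewrite cat_uniq uL /= orbF eL.
- by move=> u; case: eqP => _; [apply: form_perp_zmorph | apply: lf].
- move=> u v; rewrite !mem_cat !inE => /orP[uin|/eqP ->] /orP[vin|/eqP ->].
  + by rewrite neq // fd.
  + by rewrite neq // fe // eq_sym neq.
  + by rewrite eqxx form_perp_mem // eq_sym neq.
  + by rewrite eqxx form_perp_ker // ge.
Qed.

End BiorthExtension.

(** * Pure subgroups and independence modulo a span *)

Section Subgroup.
Variables (S : zmodType) (G : S -> Prop).
Hypothesis sG : subgroup G.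

Lemma subg0 : G 0. Proof. by case: sG. Qed.

Lemma subgD x y : G x -> G y -> G (x + y). Proof. by case: sG => _ [h _]; apply: h. Qed.

Lemma subgN x : G x -> G (- x). Proof. by case: sG => _ [_ h]; apply: h. Qed.

Lemma subgB x y : G x -> G y -> G (x - y).
Proof. by move=> hx hy; apply: subgD => //; apply: subgN. Qed.

Lemma subgMz x c : G x -> G (x *~ c).
Proof.
move=> hx; have hn (n : nat) : G (x *~ n).
  elim: n => [|n IH]; first by rewrite mulr0z; exact: subg0.
  by rewrite -[x *~ _]/(x *+ n.+1) mulrS; apply: subgD.
by case: c => n; rewrite ?NegzE ?mulrNz; [apply: hn | apply/subgN/hn].
Qed.

Lemma subg_zspan L x : (forall u, u \in L -> G u) -> zspan L x -> G x.
Proof.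
move=> h [c ->]; elim: L h => [|u L IH] h; first by rewrite big_nil; apply: subg0.
rewrite big_cons; apply: subgD; first by apply/subgMz/h; rewrite inE eqxx.
by apply: IH => v vL; apply: h; rewrite inE vL orbT.
Qed.

End Subgroup.

Lemma summand_pure (S : zmodType) (G : S -> Prop) e c : subgroup G ->
  (forall (x : S) (d : int), x *~ d = 0 -> d != 0 -> x = 0) ->
  direct_summand G -> G (e *~ c) -> c != 0 -> G e.
Proof.
move=> sG tf [C [sC [hI hD]]] he c0.
have [a [k [Ga [Ck ek]]]] := hD e.
suff k0 : k = 0 by rewrite ek k0 addr0.
apply: (tf k c _ c0); apply: hI _ (subgMz sC c Ck).
have -> : k *~ c = e *~ c - a *~ c by rewrite ek mulrzDl addrAC subrr add0r.
by apply: (subgB sG) => //; apply: subgMz.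
Qed.

Section Independence.
Variable S : zmodType.
Implicit Types (L s : seq S) (P : S -> Prop).

Lemma finite_rank_maximal_indep (A : S -> Prop) : finite_rank A ->
  exists n (v : 'I_n -> S), [/\ forall i, A (v i), Zindependent v &
    forall w : 'I_n.+1 -> S, (forall i, A (w i)) -> ~ Zindependent w].
Proof.
move=> [N hN]; apply: NNPP => H.
have P n : exists v : 'I_n -> S, (forall i, A (v i)) /\ Zindependent v.
  elim: n => [|n [v [hv iv]]]; first by exists (fun _ => 0); split => [[]|c _ []].
  apply: NNPP => H2; apply: H; exists n, v; split => // w hw iw.
  by apply: H2; exists w.
have [v [hv iv]] := P N.+1.
by have := hN _ v hv iv; rewrite ltnn.
Qed.

Lemma indep_extension_dependent n (v : 'I_n -> S) a : Zindependent v ->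
  ~ Zindependent (fun i : 'I_n.+1 => oapp v a (insub (val i))) ->
  exists c (d : 'I_n -> int), c != 0 /\ a *~ c = \sum_(i < n) v i *~ d i.
Proof.
set w := fun i : 'I_n.+1 => _; move=> iv nw.
have ww j : w (widen_ord (leqnSn n) j) = v j by rewrite /w /= valK.
have wm : w ord_max = a by rewrite /w /= insubN ?ltnn.
have [c [hc [i0 ci0]]] : exists c : 'I_n.+1 -> int,
    \sum_(i < n.+1) w i *~ c i = 0 /\ exists i, c i != 0.
  apply: NNPP => H; apply: nw => c hc i; apply/eqP/negPn/negP => ci.
  by apply: H; exists c; split => //; exists i.
pose d j := c (widen_ord (leqnSn n) j).
have hsum : \sum_(i < n) v i *~ d i + a *~ c ord_max = 0.
  by rewrite -[RHS]hc big_ord_recr /= wm; congr (_ + _); apply: eq_bigr => j _; rewrite ww.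
have cm : c ord_max != 0.
  apply/negP => /eqP cm0; move: hsum; rewrite cm0 mulr0z addr0 => /iv hd.
  case: (ltnP (val i0) n) => [lt|ge].
    have e : widen_ord (leqnSn n) (Ordinal lt) = i0 by apply: val_inj.
    by move: ci0; rewrite -e -/(d (Ordinal lt)) hd eqxx.
  have : i0 = ord_max by apply: val_inj; apply/eqP; rewrite eqn_leq ge -ltnS ltn_ord.
  by move=> e; move: ci0; rewrite e cm0 eqxx.
exists (c ord_max), (fun j => - d j); split => //.
rewrite (eq_bigr (fun i => - (v i *~ d i))) ?sumrN; last by move=> i _; rewrite mulrNz.
by apply/eqP; rewrite -addr_eq0 addrC hsum.
Qed.

Definition indep_mod P s :=
  uniq s /\ forall c : S -> int, P (\sum_(x <- s) x *~ c x) -> forall x, x \in s -> c x = 0.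

Lemma big_rem_mulrz s x0 (c : S -> int) : uniq s -> x0 \in s ->
  \sum_(x <- s) x *~ (if x == x0 then 0 else c x) = \sum_(x <- rem x0 s) x *~ c x.
Proof.
move=> us x0s; rewrite (big_rem x0) //= eqxx mulr0z add0r.
apply: eq_big_seq => x; rewrite mem_rem_uniq // => /andP[/negbTE ->] //.
Qed.

Lemma indep_mod_rem P s x0 : indep_mod P s -> x0 \in s -> indep_mod P (rem x0 s).
Proof.
move=> [us h] x0s; split; first exact: rem_uniq.
move=> c hc x; rewrite mem_rem_uniq // => /andP[xx0 xs].
have := h (fun x => if x == x0 then 0 else c x); rewrite big_rem_mulrz //.
by move=> /(_ hc x xs); rewrite (negbTE xx0).
Qed.

Lemma indep_mod_notin_zspan L s x : indep_mod (zspan L) s -> x \in s -> ~ zspan L x.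
Proof.
move=> [us h] xs sx.
have hx : \sum_(y <- s) y *~ (y == x)%:R = x.
  by rewrite (big_seq_only us xs) ?eqxx ?mulr1z // => b _ /negbTE ->; rewrite mulr0z.
have := h (fun y => (y == x)%:R); rewrite hx => /(_ sx x xs).
by rewrite eqxx => /eqP; rewrite oner_eq0.
Qed.

(* Cross-multiplying the two relations eliminates [e], leaving a relation modulo
   [zspan L] whose coefficient at [x0] is [- c x0 * b']. *)
Lemma indep_mod_cat_coef0 L e s c c' y y' b b' x0 :
  indep_mod (zspan L) s -> x0 \in s -> c x0 != 0 -> c' x0 = 0 ->
  zspan L y -> \sum_(x <- s) x *~ c x = y + e *~ b ->
  zspan L y' -> \sum_(x <- s) x *~ c' x = y' + e *~ b' -> b' = 0.
Proof.
move=> [_ hs] x0s cx0 c'x0 sy ey sy' ey'.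
pose d x := c' x * b - c x * b'.
have ed : \sum_(x <- s) x *~ d x = y' *~ b - y *~ b'.
  rewrite (eq_bigr (fun x => x *~ c' x *~ b - x *~ c x *~ b')); last first.
    by move=> x _; rewrite /d mulrzBr !mulrzA.
  rewrite sumrB -!mulrz_suml ey ey' !mulrzDl (mulrzAC _ b').
  by rewrite opprD addrACA subrr addr0.
have := hs d; rewrite ed => /(_ (zspanB (zspanMz b sy') (zspanMz b' sy)) x0 x0s).
by rewrite /d c'x0 mul0r sub0r => /eqP; rewrite oppr_eq0 mulf_eq0 (negbTE cx0) => /eqP.
Qed.

Lemma indep_mod_exchange L e s : uniq (L ++ [:: e]) -> indep_mod (zspan L) s ->
  s != [::] -> exists2 x0, x0 \in s & indep_mod (zspan (L ++ [:: e])) (rem x0 s).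
Proof.
move=> uLe hs sn; have us := hs.1.
case: (classic (indep_mod (zspan (L ++ [:: e])) s)) => hi.
  case: s sn us hs hi => // x s' _ _ _ hi.
  by exists x; rewrite ?mem_head //; apply: indep_mod_rem; rewrite ?mem_head.
have [c [hc [x0 x0s cx0]]] : exists c : S -> int,
    zspan (L ++ [:: e]) (\sum_(x <- s) x *~ c x) /\ exists2 x0, x0 \in s & c x0 != 0.
  apply: NNPP => H; apply: hi; split => // c hc x xs; apply/eqP/negPn/negP => cx.
  by apply: H; exists c; split => //; exists x.
have [y [b [sy ey]]] := (zspan_catE _ uLe).1 hc.
exists x0 => //; split; first exact: rem_uniq.
move=> c' hc'; pose c'' x := if x == x0 then 0 else c' x.
have [y' [b' [sy' ey']]] := (zspan_catE _ uLe).1 hc'.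
rewrite -big_rem_mulrz // -/c'' in ey'.
have b'0 : b' = 0.
  by apply: (indep_mod_cat_coef0 hs x0s cx0 _ sy ey sy' ey'); rewrite /c'' eqxx.
rewrite b'0 mulr0z addr0 in ey'; rewrite -{}ey' in sy'.
move=> x; rewrite mem_rem_uniq // => /andP[xx0 xs].
by have := hs.2 c'' sy' x xs; rewrite /c'' (negbTE xx0).
Qed.

End Independence.

(** * Automorphisms and truth of formulas *)

Section Automorphisms.
Variable S : zmodType.
Implicit Types (sg : S -> S) (phi : S -> int) (L : seq S).

Definition zauto sg := zmorph sg /\ bijective sg.

Lemma zauto_id : zauto id.
Proof. by split => //; exists id. Qed.

Lemma zauto_comp s1 s2 : zauto s1 -> zauto s2 -> zauto (s2 \o s1).
Proof. by move=> [a1 b1] [a2 b2]; split; [move=> x y /=; rewrite a1 a2 | apply: bij_comp]. Qed.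

Definition transvection phi (z x : S) := x + z *~ phi x.

Lemma transvection_zauto phi z : zmorph phi -> phi z = 0 -> zauto (transvection phi z).
Proof.
move=> lp pz; split; first by move=> x y; rewrite /transvection lp mulrzDr addrACA.
exists (fun x => x - z *~ phi x) => x; rewrite /transvection.
  by rewrite lp (zmorphMz _ _ lp) pz mul0rz addr0 addrK.
by rewrite (zmorphB _ _ lp) (zmorphMz _ _ lp) pz mul0rz subr0 subrK.
Qed.

Lemma transvection_id phi z x : phi x = 0 -> transvection phi z x = x.
Proof. by move=> h; rewrite /transvection h mulr0z addr0. Qed.

Lemma zauto_inv sg : zauto sg ->
  exists tau, [/\ zauto tau, cancel sg tau & cancel tau sg].
Proof.
move=> [asg [tau c1 c2]]; exists tau; split => //; split; last by exists sg.
by move=> x y; apply: (can_inj c1); rewrite asg !c2.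
Qed.

Lemma zauto_fix_inv sg tau x : cancel sg tau -> sg x = x -> tau x = x.
Proof. by move=> c1 e; rewrite -{1}e c1. Qed.

(* Two transvections along the extra direction [b] send [e] to [e + b], then to [b]. *)
Lemma zauto_to_fresh L e b (ge h : S -> int) :
  zmorph ge -> ge e = 1 -> (forall u, u \in L -> ge u = 0) ->
  zmorph h -> h e = 0 -> h b = 1 -> (forall u, u \in L -> h u = 0) ->
  exists sg, [/\ zauto sg, sg e = b & forall x, zspan L x -> sg x = x].
Proof.
move=> lge ge1 geL lh he hb hL.
pose phi x := ge x - ge b * h x.
have lphi : zmorph phi by move=> x y; rewrite /phi lge lh mulrDr opprD addrACA.
have phib : phi b = 0 by rewrite /phi hb mulr1 subrr.
have hNe : h (- e) = 0 by rewrite zmorphN // he oppr0.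
exists (transvection h (- e) \o transvection phi b); split.
- exact: zauto_comp (transvection_zauto lphi phib) (transvection_zauto lh hNe).
- rewrite /= {2}/transvection /phi he mulr0 subr0 ge1 mulr1z /transvection.
  by rewrite lh he hb add0r mulNrz mulr1z addrAC subrr add0r.
- move=> x sx; have hx : h x = 0 := zmorph_zspan0 lh hL sx.
  have phix : phi x = 0 by rewrite /phi hx mulr0 subr0 (zmorph_zspan0 lge geL sx).
  by rewrite /= transvection_id // transvection_id.
Qed.

End Automorphisms.

Section Semantics.
Variable S : zmodType.
Implicit Types (sg : S -> S) (env : nat -> S) (P Q : S -> Prop).

Fixpoint qdepth (phi : formula S) : nat :=
  match phi with
  | fEq _ _ | fFalse => 0
  | fNot g => qdepth g
  | fAnd g h | fOr g h | fImp g h => maxn (qdepth g) (qdepth h)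
  | fAll _ g | fEx _ g => (qdepth g).+1
  end.

Fixpoint term_consts (t : term S) : seq S :=
  match t with
  | tConst a => [:: a]
  | tAdd t1 t2 => term_consts t1 ++ term_consts t2
  | tNeg t1 => term_consts t1
  | _ => [::]
  end.

Fixpoint consts (phi : formula S) : seq S :=
  match phi with
  | fEq t1 t2 => term_consts t1 ++ term_consts t2
  | fFalse => [::]
  | fNot g | fAll _ g | fEx _ g => consts g
  | fAnd g h | fOr g h | fImp g h => consts g ++ consts h
  end.

Lemma mem_term_consts_in P t : (forall c, c \in term_consts t -> P c) -> term_consts_in P t.
Proof.
elim: t => [n|a||t1 IH1 t2 IH2|t1 IH1] //= h; first by apply: h; rewrite mem_head.
by split; [apply: IH1 | apply: IH2] => c cin; apply: h; rewrite mem_cat cin ?orbT.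
Qed.

Lemma mem_consts_in P phi : (forall c, c \in consts phi -> P c) -> consts_in P phi.
Proof.
elim: phi => [t1 t2||g IH|g IHg h IHh|g IHg h IHh|g IHg h IHh|n g IH|n g IH] //= H;
  try (by apply: IH);
  try (by split; [apply: IHg | apply: IHh] => c cin; apply: H; rewrite mem_cat cin ?orbT).
by split; apply: mem_term_consts_in => c cin; apply: H; rewrite mem_cat cin ?orbT.
Qed.

Lemma term_consts_in_sub P Q t : (forall c, P c -> Q c) ->
  term_consts_in P t -> term_consts_in Q t.
Proof.
move=> h; elim: t => [n|a||t1 IH1 t2 IH2|t1 IH1] //=; first exact: h.
by move=> [h1 h2]; split; [apply: IH1 | apply: IH2].
Qed.

Lemma consts_in_sub P Q phi : (forall c, P c -> Q c) -> consts_in P phi -> consts_in Q phi.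
Proof.
move=> h; elim: phi => [t1 t2||g IH|g IHg k IHk|g IHg k IHk|g IHg k IHk|n g IH|n g IH] //=;
  try exact: IH; move=> [h1 h2].
- by split; apply: (term_consts_in_sub h).
all: by split; [apply: IHg | apply: IHk].
Qed.

Lemma term_eval_zauto sg env t : zmorph sg -> term_consts_in (fun c => sg c = c) t ->
  term_eval (sg \o env) t = sg (term_eval env t).
Proof.
move=> asg; elim: t => [n|a|| t1 IH1 t2 IH2 [h1 h2]|t1 IH1 h1] //=.
- by rewrite zmorph0.
- by rewrite IH1 // IH2 // asg.
- by rewrite IH1 // zmorphN.
Qed.

Lemma comp_upd sg env n x : sg \o upd env n x = upd (sg \o env) n (sg x).
Proof. by apply: functional_extensionality => m; rewrite /upd /=; case: eqP. Qed.

Lemma holds_zauto sg env phi : zauto sg -> consts_in (fun c => sg c = c) phi ->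
  holds (fun _ => True) env phi <-> holds (fun _ => True) (sg \o env) phi.
Proof.
move=> [asg [tau c1 c2]].
elim: phi env => [t1 t2||g IH|g IHg h IHh|g IHg h IHh|g IHg h IHh|n g IH|n g IH] env /=.
- move=> [h1 h2]; rewrite !term_eval_zauto //.
  by split=> [-> // | /(can_inj c1)].
- by [].
- by move=> hc; rewrite IH.
- by move=> [hg hh]; rewrite IHg // IHh.
- by move=> [hg hh]; rewrite IHg // IHh.
- by move=> [hg hh]; rewrite IHg // IHh.
- move=> hc; split => H x _; last by apply/(IH _ hc); rewrite comp_upd; apply: H.
  by have := (IH (upd env n (tau x)) hc).1 (H _ I); rewrite comp_upd c2.
- move=> hc; split => [[x [_ H]]|[x [_ H]]].
    by exists (sg x); split => //; rewrite -comp_upd; apply/(IH (upd env n x) hc).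
  exists (tau x); split => //; apply/(IH _ hc).
  by rewrite comp_upd c2.
Qed.

End Semantics.

(** * Coordinates with respect to a basis *)

Section GcdSeq.
Variables (T : eqType) (a : T -> int).

Definition gcd_seq (U : seq T) : int := foldr (fun b g => gcdz (a b) g) 0 U.

Lemma dvdz_gcd_seq U b : b \in U -> (gcd_seq U %| a b)%Z.
Proof.
elim: U => [//|b0 U IH]; rewrite inE => /orP[/eqP ->|bU] /=; first exact: dvdz_gcdl.
exact: dvdz_trans (dvdz_gcdr _ _) (IH bU).
Qed.

Lemma gcd_seq_eq0 U b : gcd_seq U = 0 -> b \in U -> a b = 0.
Proof.
elim: U => [//|b0 U IH] /= /eqP; rewrite gcdz_eq0 => /andP[/eqP h0 /eqP h1].
by rewrite inE => /orP[/eqP ->|bU] //; apply: IH.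
Qed.

Lemma gcd_seq_bezout U : uniq U ->
  exists beta : T -> int, \sum_(b <- U) beta b * a b = gcd_seq U.
Proof.
elim: U => [_|b0 U IH] /=; first by exists (fun _ => 0); rewrite big_nil.
move=> /andP[nb uU]; have [beta hb] := IH uU.
have [u [v huv]] := Bezoutz (a b0) (gcd_seq U).
exists (fun x => if x == b0 then u else v * beta x).
rewrite big_cons eqxx -huv; congr (_ + _).
rewrite -hb mulr_sumr; apply: eq_big_seq => b bU.
by rewrite ifN ?mulrA //; apply: contraNneq nb => <-.
Qed.

End GcdSeq.

Section Basis.
Variables (S : zmodType) (Bp : S -> Prop).
Hypothesis Bind : forall n (v : 'I_n -> S),
  injective v -> (forall i, Bp (v i)) -> Zindependent v.
Hypothesis Bspan : forall x : S, exists n (v : 'I_n -> S) (c : 'I_n -> int),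
  (forall i, Bp (v i)) /\ x = \sum_(i < n) v i *~ c i.
Hypothesis Binf : forall n (v : 'I_n -> S), exists b, Bp b /\ forall i, v i <> b.
Implicit Types (x y : S) (L E : seq S) (r : seq (S * int)).

Definition basis_rep r x :=
  (forall p, p \in r -> Bp p.1) /\ x = \sum_(p <- r) p.1 *~ p.2.

Definition rep_coef b r := \sum_(p <- r | p.1 == b) p.2.

Lemma exists_basis_rep x : exists r, basis_rep r x.
Proof.
have [n [v [c [hB ->]]]] := Bspan x.
exists [seq (v i, c i) | i <- index_enum 'I_n]; split; last by rewrite big_map.
by move=> p /mapP[i _ ->]; apply: hB.
Qed.

Lemma rep_coef_cons b p r : rep_coef b (p :: r) = (p.1 == b)%:R * p.2 + rep_coef b r.
Proof. by rewrite /rep_coef big_cons; case: eqP => _; rewrite ?mul1r ?mul0r ?add0r. Qed.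

Lemma rep_coef_cat b r1 r2 : rep_coef b (r1 ++ r2) = rep_coef b r1 + rep_coef b r2.
Proof. by rewrite /rep_coef big_cat. Qed.

Lemma sum_rep_regroup U r : uniq U -> (forall p, p \in r -> p.1 \in U) ->
  \sum_(p <- r) p.1 *~ p.2 = \sum_(b <- U) b *~ rep_coef b r.
Proof.
move=> uU; elim: r => [|p r IH] h.
  by rewrite big_nil big1 // => b _; rewrite /rep_coef big_nil mulr0z.
rewrite big_cons IH; last by move=> q qr; apply: h; rewrite inE qr orbT.
under [RHS]eq_bigr do rewrite rep_coef_cons mulrzDr.
rewrite big_split /=; congr (_ + _).
rewrite (big_seq_only (u := p.1)) ?eqxx ?mul1r //; first by apply: h; rewrite mem_head.
by move=> b _ bp; rewrite eq_sym (negbTE bp) mul0r mulr0z.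
Qed.

Lemma rep_coef_unique r1 r2 x b : basis_rep r1 x -> basis_rep r2 x ->
  rep_coef b r1 = rep_coef b r2.
Proof.
move=> [h1 e1] [h2 e2]; set U := undup (map fst (r1 ++ r2)).
have uU : uniq U := undup_uniq _.
have inU1 p : p \in r1 -> p.1 \in U by move=> pr; rewrite mem_undup map_f // mem_cat pr.
have inU2 p : p \in r2 -> p.1 \in U by move=> pr; rewrite mem_undup map_f // mem_cat pr orbT.
have hsum : \sum_(b <- U) b *~ (rep_coef b r1 - rep_coef b r2) = 0.
  under eq_bigr do rewrite mulrzBr.
  by rewrite sumrB -!sum_rep_regroup // -e1 -e2 subrr.
case: (boolP (b \in U)) => bU; last first.
  rewrite /rep_coef !big1_seq // => p /andP[/eqP pb pr]; move: bU; rewrite -pb.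
    by rewrite inU2.
  by rewrite inU1.
have uB (i : 'I_(size U)) : Bp (nth 0 U i).
  have := mem_nth 0 (ltn_ord i); rewrite mem_undup => /mapP[p].
  by rewrite mem_cat => /orP[] pr ->; [apply: h1 | apply: h2].
have inj : injective (fun i : 'I_(size U) => nth 0 U i).
  by move=> i j /eqP; rewrite nth_uniq // => /eqP/val_inj.
rewrite (big_nth 0) big_mkord in hsum.
have ib : (index b U < size U)%N by rewrite index_mem.
have /eqP := Bind inj uB hsum (Ordinal ib).
by rewrite /= (nth_index 0 bU) subr_eq0 => /eqP.
Qed.

Definition rep x : seq (S * int) :=
  proj1_sig (constructive_indefinite_description _ (exists_basis_rep x)).

Lemma repP x : basis_rep (rep x) x.
Proof. exact: proj2_sig (constructive_indefinite_description _ (exists_basis_rep x)). Qed.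

Definition coord b x := rep_coef b (rep x).

Lemma coordE r x b : basis_rep r x -> coord b x = rep_coef b r.
Proof. exact: rep_coef_unique (repP x). Qed.

Lemma coord_zmorph b : zmorph (coord b).
Proof.
move=> x y; rewrite (@coordE (rep x ++ rep y)) ?rep_coef_cat //.
have [h1 e1] := repP x; have [h2 e2] := repP y.
split; first by move=> p; rewrite mem_cat => /orP[]; [apply: h1 | apply: h2].
by rewrite big_cat -e1 -e2.
Qed.

Lemma coord_basis b u : Bp u -> coord b u = (u == b)%:R.
Proof.
move=> hu; rewrite (@coordE [:: (u, 1)]) ?rep_coef_cons /rep_coef ?big_nil ?addr0 ?mulr1 //.
by split; [move=> p; rewrite inE => /eqP -> | rewrite big_seq1 mulr1z].
Qed.

Definition supp x := undup (map fst (rep x)).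

Lemma supp_uniq x : uniq (supp x).
Proof. exact: undup_uniq. Qed.

Lemma supp_basis x b : b \in supp x -> Bp b.
Proof. by rewrite mem_undup => /mapP[p pr ->]; have [h _] := repP x; apply: h. Qed.

Lemma coord_notin_supp x b : b \notin supp x -> coord b x = 0.
Proof.
move=> nb; rewrite /coord /rep_coef big1_seq // => p /andP[/eqP pb pr].
by move: nb; rewrite -pb mem_undup map_f.
Qed.

Lemma coord_expansion x : x = \sum_(b <- supp x) b *~ coord b x.
Proof.
have [h e] := repP x; rewrite {1}e (sum_rep_regroup (U := supp x)) ?supp_uniq //.
by move=> p pr; rewrite mem_undup map_f.
Qed.

Lemma zspan_coord0 E x : uniq E -> (forall b, Bp b -> b \notin E -> coord b x = 0) ->
  zspan E x.
Proof.
move=> uE h; exists (coord ^~ x); rewrite {1}(coord_expansion x).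
apply: eq_big_seq_supp; rewrite ?supp_uniq //.
  by move=> b bs bE; rewrite h ?mulr0z //; apply: supp_basis bs.
by move=> b _ bs; rewrite coord_notin_supp ?mulr0z.
Qed.

Definition basis_seq E := uniq E /\ forall u, u \in E -> Bp u.

Lemma coord_zspan0 E x b : basis_seq E -> zspan E x -> b \notin E -> coord b x = 0.
Proof.
move=> [uE bE] sx nb; apply: (zmorph_zspan0 (coord_zmorph b) _ sx) => u uin.
rewrite coord_basis; last exact: bE.
case: (eqVneq u b) => [eub|//].
by move: nb; rewrite -eub uin.
Qed.

Lemma basis_seq_biorth E : basis_seq E -> biorthogonal E coord.
Proof.
move=> [uE bE]; split => //; first exact: coord_zmorph.
by move=> u v uin vin; rewrite coord_basis 1?eq_sym //; apply: bE.
Qed.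

Lemma fresh_basis E : exists b, Bp b /\ b \notin E.
Proof.
have [b [hb hn]] := Binf (fun i : 'I_(size E) => nth 0 E i).
exists b; split => //; apply/negP => bin.
have ib : (index b E < size E)%N by rewrite index_mem.
by apply: (hn (Ordinal ib)); rewrite /= nth_index.
Qed.

Lemma basis_seq_cover (X : seq S) : exists E, basis_seq E /\ forall x, x \in X -> zspan E x.
Proof.
exists (undup (flatten (map supp X))); split.
  split; first exact: undup_uniq.
  by move=> u; rewrite mem_undup => /flatten_mapP[x _]; apply: supp_basis.
move=> x xX; apply: zspan_coord0; first exact: undup_uniq.
move=> b hb; apply: contraNeq => /negbTE cb; rewrite mem_undup.
apply/flatten_mapP; exists x => //; apply: contraFT cb => /coord_notin_supp ->.
by rewrite eqxx.
Qed.

Lemma basis_seq_extend k E : basis_seq E -> exists H, size H = k /\ basis_seq (E ++ H).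
Proof.
move=> bE; elim: k => [|k [H [sH [uEH bEH]]]]; first by exists [::]; rewrite cats0.
have [b [hb nb]] := fresh_basis (E ++ H).
exists (rcons H b); rewrite size_rcons sH -rcons_cat; split => //.
split; first by rewrite rcons_uniq nb uEH.
by move=> u; rewrite mem_rcons inE => /orP[/eqP -> //|]; apply: bEH.
Qed.

(* Dividing the coordinates of [q] by their gcd [g] gives [e] with [q = e *~ g];
   a Bezout combination of the coordinates is a form sending [e] to 1. *)
Lemma primitive_decomposition q : q != 0 -> exists e (g : int) (phi : S -> int),
  [/\ zmorph phi, phi e = 1, q = e *~ g & g != 0].
Proof.
move=> nq; set U := supp q; set a := coord ^~ q.
have bU : basis_seq U by split; [apply: supp_uniq | move=> u; apply: supp_basis].
set g := gcd_seq a U.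
have g0 : g != 0.
  apply: contra nq => /eqP g0; apply/eqP.
  rewrite (coord_expansion q) big1_seq // => b /andP[_ bin].
  by rewrite -/(a b) (gcd_seq_eq0 g0 bin) mulr0z.
have [beta hbeta] := gcd_seq_bezout a (supp_uniq q).
set e := \sum_(b <- U) b *~ (a b %/ g)%Z.
exists e, g, (fun x => \sum_(b <- U) beta b * coord b x); split => //.
- by move=> x y; rewrite -big_split; apply: eq_bigr => b _; rewrite coord_zmorph mulrDr.
- have hg : g = \sum_(b <- U) beta b * a b by rewrite hbeta.
  apply: (mulIf g0); rewrite mul1r {2}hg mulr_suml; apply: eq_big_seq => b bin.
  rewrite /e (biorth_coef (basis_seq_biorth bU) _ bin) -mulrA divzK //.
  exact: dvdz_gcd_seq.
- rewrite /e mulrz_suml {1}(coord_expansion q); apply: eq_big_seq => b bin.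
  by rewrite -mulrzA divzK //; exact: dvdz_gcd_seq.
Qed.

Lemma zmod_torsionfree x (c : int) : x *~ c = 0 -> c != 0 -> x = 0.
Proof.
move=> h c0; apply/eqP; apply: contraT => nx.
have [e [g [phi [lphi pe xe g0]]]] := primitive_decomposition nx.
have : phi (x *~ c) = 0 by rewrite h zmorph0.
rewrite zmorphMz // xe zmorphMz // pe !mulrzz mul1r => /eqP.
by rewrite mulf_eq0 (negbTE g0) (negbTE c0).
Qed.

Lemma biorth_decomposition L f x : biorthogonal L f -> ~ zspan L x ->
  exists e (g : int) (phi : S -> int), [/\ zmorph phi, phi e = 1,
    x = proj L f x + e *~ g, g != 0 & forall u, u \in L -> f u e = 0].
Proof.
move=> bL nx; have nq : x - proj L f x != 0.
  apply/eqP => /eqP; rewrite subr_eq0 => /eqP ex.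
  by apply: nx; rewrite ex; apply: zspan_proj.
have [e [g [phi [lphi pe qe g0]]]] := primitive_decomposition nq.
exists e, g, phi; split => //; first by rewrite -qe addrC subrK.
move=> u uin; have := biorth_proj_compl bL x uin; rewrite qe.
case: bL => _ lf _; rewrite zmorphMz // mulrzz => /eqP.
by rewrite mulf_eq0 (negbTE g0) orbF => /eqP.
Qed.

Lemma zspan_basis_in_I E : basis_seq E -> in_I (zspan E).
Proof.
move=> bE; have bL := basis_seq_biorth bE.
split; [|split].
- by split; [apply: zspan0 | split; [apply: zspanD | apply: zspanN]].
- by exists (size E) => n v hv ind; apply: (biorth_rank_bound bL ind).
- exists (fun x => forall u, u \in E -> coord u x = 0); split; [|split].
  + split; first by move=> u _; rewrite zmorph0 //; apply: coord_zmorph.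
    split=> [x y hx hy u uin | x hx u uin]; rewrite ?coord_zmorph ?hx ?hy ?addr0 //.
    by rewrite zmorphN ?hx ?oppr0 //; apply: coord_zmorph.
  + move=> x sx cx; rewrite (biorth_zspanE bL sx) /proj.
    by rewrite big1_seq // => u /andP[_ uin]; rewrite cx // mulr0z.
  + move=> x; exists (proj E coord x), (x - proj E coord x).
    split; first exact: zspan_proj.
    by split; [move=> u uin; apply: biorth_proj_compl | rewrite addrC subrK].
Qed.

Lemma finite_rank_sub_zspan (A : S -> Prop) : finite_rank A ->
  exists E, basis_seq E /\ forall a, A a -> zspan E a.
Proof.
move=> fA; have [n [v [hv iv hmax]]] := finite_rank_maximal_indep fA.
have [E [bE hE]] := basis_seq_cover [seq v i | i <- enum 'I_n].
exists E; split => // a ha.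
have [c [d [c0 ecd]]] : exists c (d : 'I_n -> int),
    c != 0 /\ a *~ c = \sum_(i < n) v i *~ d i.
  apply: indep_extension_dependent iv (hmax _ _) => i.
  by case: insub => [j|] /=; [apply: hv | apply: ha].
have sa : zspan E (a *~ c).
  by rewrite ecd; apply: zspan_sum => i; apply/zspanMz/hE; rewrite map_f ?mem_enum.
apply: zspan_coord0; first by case: bE.
move=> b _ nb; have /eqP := coord_zspan0 bE sa nb.
by rewrite (zmorphMz _ _ (coord_zmorph b)) mulrzz mulf_eq0 (negbTE c0) orbF => /eqP.
Qed.

Lemma in_I_directed (A1 A2 : S -> Prop) : in_I A1 -> in_I A2 ->
  exists B, [/\ in_I B, Defs.subset A1 B & Defs.subset A2 B].
Proof.
move=> [_ [f1 _]] [_ [f2 _]].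
have [E1 [[u1 b1] h1]] := finite_rank_sub_zspan f1.
have [E2 [[u2 b2] h2]] := finite_rank_sub_zspan f2.
have bE : basis_seq (undup (E1 ++ E2)).
  split=> [|u]; first exact: undup_uniq.
  by rewrite mem_undup mem_cat => /orP[/b1|/b2].
exists (zspan (undup (E1 ++ E2))); split; first exact: zspan_basis_in_I.
  move=> a /h1; apply: zspan_subset bE.1 _ => // v vin.
  by rewrite mem_undup mem_cat vin.
move=> a /h2; apply: zspan_subset bE.1 _ => // v vin.
by rewrite mem_undup mem_cat vin orbT.
Qed.

(* [e] and [w] are both moved to a common fresh basis vector. *)
Lemma zauto_move L e w (ge gw : S -> int) :
  zmorph ge -> zmorph gw -> ge e = 1 -> gw w = 1 ->
  (forall u, u \in L -> ge u = 0) -> (forall u, u \in L -> gw u = 0) ->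
  exists sg, [/\ zauto sg, sg e = w & forall x, zspan L x -> sg x = x].
Proof.
move=> lge lgw ge1 gw1 geL gwL.
have [E [bE hE]] := basis_seq_cover (e :: w :: L).
have [b [hb nb]] := fresh_basis E.
have lh := coord_zmorph b.
have h0 x : x \in e :: w :: L -> coord b x = 0.
  by move=> xin; apply: coord_zspan0 bE (hE x xin) nb.
have hL u : u \in L -> coord b u = 0 by move=> uin; apply: h0; rewrite !inE uin !orbT.
have hb1 : coord b b = 1 by rewrite coord_basis // eqxx.
have [sg [asg sge sgL]] := zauto_to_fresh lge ge1 geL lh (h0 _ (mem_head _ _)) hb1 hL.
have [tw [atw twb twL]] : exists tw, [/\ zauto tw, tw w = b & forall x, zspan L x -> tw x = x].
  by apply: zauto_to_fresh lgw gw1 gwL lh _ hb1 hL; apply: h0; rewrite !inE eqxx orbT.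
have [tau [atau c1 c2]] := zauto_inv atw.
exists (tau \o sg); split.
- exact: zauto_comp.
- by rewrite /= sge -twb c1.
- by move=> x sx; rewrite /= sgL // (zauto_fix_inv c1 (twL x sx)).
Qed.

(** * The back-and-forth game *)

Section Game.
Variable G : S -> Prop.
Hypotheses (sG : subgroup G) (dG : direct_summand G).
Implicit Types (f : S -> S -> int) (env : nat -> S).

(* Invariant of the back-and-forth argument: [L] is a biorthogonal family in [G]
   whose span contains the current assignment, and [s] lists [k] elements of [G]
   independent modulo [zspan L], one for each quantifier still to be played. *)
Record game_state L f k s env : Prop := GameState {
  gs_biorth : biorthogonal L f;
  gs_sub : forall u, u \in L -> G u;
  gs_env : forall m, zspan L (env m);
  gs_indep : indep_mod (zspan L) s;
  gs_size : size s = k;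
  gs_spare : forall x, x \in s -> G x }.

Lemma subG_pure e c : G (e *~ c) -> c != 0 -> G e.
Proof. exact: summand_pure sG zmod_torsionfree dG. Qed.

Lemma zspan_upd L env n x : (forall m, zspan L (env m)) -> zspan L x ->
  forall m, zspan L (upd env n x m).
Proof. by move=> he hx m; rewrite /upd; case: eqP. Qed.

Lemma game_state_primitive L f k s env y e g : game_state L f k s env -> G y ->
  y = proj L f y + e *~ g -> g != 0 -> G e.
Proof.
move=> st Gy ye g0; apply: subG_pure g0; rewrite -(addKr (proj L f y) (e *~ g)) -ye.
exact (subgD sG (subgN sG (subg_zspan sG (gs_sub st) (zspan_proj L f y))) Gy).
Qed.

Lemma game_state_spare L f k s env : game_state L f k.+1 s env ->
  exists h s', s = h :: s'.
Proof. by case: s => [[_ _ _ _ //]|h s' _]; exists h, s'. Qed.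

Lemma game_state_drop L f k s env n x : game_state L f k.+1 s env -> zspan L x ->
  exists s', game_state L f k s' (upd env n x).
Proof.
move=> st sx; have [h [s' es]] := game_state_spare st.
have hs : h \in s by rewrite es mem_head.
exists (rem h s); split.
- exact: gs_biorth st.
- exact: gs_sub st.
- by apply: zspan_upd => //; apply: gs_env st.
- exact: indep_mod_rem (gs_indep st) hs.
- by rewrite size_rem // (gs_size st).
- by move=> y /mem_rem /(gs_spare st).
Qed.

Lemma game_state_extend L f k s env n x e (g : S -> int) :
  game_state L f k.+1 s env -> (forall u, u \in L -> f u e = 0) ->
  zmorph g -> g e = 1 -> G e -> zspan (L ++ [:: e]) x ->
  exists f' s', game_state (L ++ [:: e]) f' k s' (upd env n x).
Proof.
move=> st fe lg ge Ge sx.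
have [f' bf'] := biorth_extend (gs_biorth st) fe lg ge.
have uLe : uniq (L ++ [:: e]) by case: bf'.
have sn : s != [::] by have [h [s' ->]] := game_state_spare st.
have [x0 x0s ind'] := indep_mod_exchange uLe (gs_indep st) sn.
exists f', (rem x0 s); split => //.
- by move=> u; rewrite mem_cat inE => /orP[/(gs_sub st)|/eqP ->].
- by apply: zspan_upd => // m; apply: zspan_catl (gs_env st m).
- by rewrite size_rem // (gs_size st).
- by move=> y /mem_rem /(gs_spare st).
Qed.

Lemma game_move L f k s env n x : game_state L f k.+1 s env -> G x ->
  exists L' f' s', game_state L' f' k s' (upd env n x) /\
    forall y, zspan L y -> zspan L' y.
Proof.
move=> st Gx; have bL := gs_biorth st.
case: (classic (zspan L x)) => sx.
  by have [s' st'] := game_state_drop n st sx; exists L, f, s'.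
have [e [g [phi [lphi pe xe g0 fe]]]] := biorth_decomposition bL sx.
have Ge : G e := game_state_primitive st Gx xe g0.
have uLe : uniq (L ++ [:: e]) by have [f' []] := biorth_extend bL fe lphi pe.
have sx' : zspan (L ++ [:: e]) x.
  rewrite xe; apply: zspanD; first by apply/zspan_catl/zspan_proj.
  by apply/zspanMz/zspan_mem; rewrite // mem_cat mem_head orbT.
have [f' [s' st']] := game_state_extend n st fe lphi pe Ge sx'.
by exists (L ++ [:: e]), f', s'; split => // y; apply: zspan_catl.
Qed.

(* A spare element [h] of [G] provides a primitive [w] in [G] outside
   [zspan L], and the new part of [x] can be moved onto [w]. *)
Lemma game_pull L f k s env x : game_state L f k.+1 s env ->
  exists sg, [/\ zauto sg, forall y, zspan L y -> sg y = y & G (sg x)].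
Proof.
move=> st; have bL := gs_biorth st.
case: (classic (zspan L x)) => sx.
  by exists id; split => //; [apply: zauto_id | exact: (subg_zspan sG (gs_sub st) sx)].
have [e [g [ge [lge ge1 xe g0 fe]]]] := biorth_decomposition bL sx.
have [h [s' es]] := game_state_spare st.
have hs : h \in s by rewrite es mem_head.
have [w [g1 [gw [lgw gw1 he g10 fw]]]] :=
  biorth_decomposition bL (indep_mod_notin_zspan (gs_indep st) hs).
have Gw : G w := game_state_primitive st (gs_spare st hs) he g10.
have [sg [asg sge sgL]] := zauto_move (form_perp_zmorph bL lge) (form_perp_zmorph bL lgw)
  (etrans (form_perp_ker ge fe) ge1) (etrans (form_perp_ker gw fw) gw1)
  (form_perp_mem bL ge) (form_perp_mem bL gw).
exists sg; split => //; rewrite xe asg.1 (sgL _ (zspan_proj L f x)) (zmorphMz _ _ asg.1) sge.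
exact (subgD sG (subg_zspan sG (gs_sub st) (zspan_proj L f x)) (subgMz sG g Gw)).
Qed.

Lemma holds_zauto_upd sg L env n x (phi : formula S) : zauto sg ->
  (forall y, zspan L y -> sg y = y) -> (forall m, zspan L (env m)) ->
  consts_in (zspan L) phi ->
  holds (fun _ => True) (upd env n x) phi <-> holds (fun _ => True) (upd env n (sg x)) phi.
Proof.
move=> asg sgL he hc.
have -> : upd env n (sg x) = sg \o upd env n x.
  rewrite comp_upd; congr upd; apply: functional_extensionality => m /=.
  exact/esym/sgL/he.
exact/holds_zauto/(consts_in_sub sgL hc).
Qed.

Lemma holds_transfer (phi : formula S) L f k s env : game_state L f k s env ->
  consts_in (zspan L) phi -> (qdepth phi <= k)%N ->
  holds G env phi <-> holds (fun _ => True) env phi.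
Proof.
elim: phi L f k s env => [t1 t2||g IH|g IHg h IHh|g IHg h IHh|g IHg h IHh|n g IH|n g IH]
  L f k s env st /= hc hq; try by [].
- by rewrite (IH _ _ _ _ _ st).
- move: hq; rewrite geq_max => /andP[hg hh]; case: hc => hcg hch.
  by rewrite (IHg _ _ _ _ _ st) // (IHh _ _ _ _ _ st).
- move: hq; rewrite geq_max => /andP[hg hh]; case: hc => hcg hch.
  by rewrite (IHg _ _ _ _ _ st) // (IHh _ _ _ _ _ st).
- move: hq; rewrite geq_max => /andP[hg hh]; case: hc => hcg hch.
  by rewrite (IHg _ _ _ _ _ st) // (IHh _ _ _ _ _ st).
- case: k st hq => // k st hq; split=> H x Gx.
    have [sg [asg sgL Gsx]] := game_pull x st.
    have [L' [f' [s' [st' sub]]]] := game_move n st Gsx.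
    rewrite (holds_zauto_upd n x asg sgL (gs_env st) hc).
    by rewrite -(IH _ _ _ _ _ st' (consts_in_sub sub hc) hq); apply: H.
  have [L' [f' [s' [st' sub]]]] := game_move n st Gx.
  by rewrite (IH _ _ _ _ _ st' (consts_in_sub sub hc) hq); apply: H.
- case: k st hq => // k st hq; split=> [[x [Gx H]] | [x [_ H]]].
    have [L' [f' [s' [st' sub]]]] := game_move n st Gx.
    by exists x; rewrite -(IH _ _ _ _ _ st' (consts_in_sub sub hc) hq).
  have [sg [asg sgL Gsx]] := game_pull x st.
  have [L' [f' [s' [st' sub]]]] := game_move n st Gsx.
  exists (sg x); rewrite (IH _ _ _ _ _ st' (consts_in_sub sub hc) hq).
  by rewrite -(holds_zauto_upd n x asg sgL (gs_env st) hc).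
Qed.

End Game.

Lemma game_state_start (G : S -> Prop) E0 H : basis_seq (E0 ++ H) ->
  (forall y, zspan (E0 ++ H) y -> G y) -> game_state G E0 coord (size H) H (fun _ => 0).
Proof.
move=> [uEH bEH] sub; have := uEH; rewrite cat_uniq => /and3P[uE0 /hasPn dis uH].
have bE0 : basis_seq E0 by split=> // u uin; apply: bEH; rewrite mem_cat uin.
have bH : basis_seq H by split=> // u uin; apply: bEH; rewrite mem_cat uin orbT.
split => //.
- exact: basis_seq_biorth.
- by move=> u uin; apply/sub/zspan_mem; rewrite // mem_cat uin.
- by move=> m; apply: zspan0.
- split=> // c hc x xH; have := coord_zspan0 bE0 hc (dis x xH).
  by rewrite (biorth_coef (basis_seq_biorth bH) _ xH).
- by move=> x xH; apply/sub/zspan_mem; rewrite // mem_cat xH orbT.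
Qed.

Lemma Th_eventually (phi : formula S) : exists A0, in_I A0 /\
  forall B, in_I B -> Defs.subset A0 B -> (Th B phi <-> ThS phi).
Proof.
have [E0 [bE0 hE0]] := basis_seq_cover (consts phi).
have [H [sH bEH]] := basis_seq_extend (qdepth phi) bE0.
exists (zspan (E0 ++ H)); split => [|B [sB [_ dB]] sub]; first exact: zspan_basis_in_I.
have st := game_state_start bEH sub; rewrite sH in st.
have cE0 : consts_in (zspan E0) phi by apply: mem_consts_in.
have cB : consts_in B phi := consts_in_sub (fun y => subg_zspan sB (gs_sub st)) cE0.
have cT : consts_in (fun _ => True) phi by apply: mem_consts_in.
rewrite /Th /ThS (holds_transfer sB dB st cE0 (leqnn _)).
by split=> [[? [_ ?]] | [? [_ ?]]].
Qed.

End Basis.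

Theorem mainTheorem13 (S : zmodType) (HS : free_abelian_infinite_rank S) :
  (forall f : formula S, limsup_I f <-> ThS f) /\
  (forall f : formula S, liminf_I f <-> ThS f).
Proof.
have [Bp [Bind [Bspan Binf]]] := HS.
have directed := @in_I_directed _ _ Bind Bspan.
split=> phi; have [A0 [IA0 thA0]] := Th_eventually Bind Bspan Binf phi.
- split=> [H | hS A IA].
    by have [B [IB [sub hB]]] := H A0 IA0; apply/(thA0 B IB sub).
  have [B [IB sAB s0B]] := directed _ _ IA IA0.
  by exists B; split => //; split => //; apply/(thA0 B IB s0B).
- split=> [[A [IA H]] | hS].
    have [B [IB sAB s0B]] := directed _ _ IA IA0.
    by apply/(thA0 B IB s0B)/H.
  by exists A0; split => // B IB sub; apply/(thA0 B IB sub).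
Qed.
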